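(* Suppose $M\preceq N$ are small models in $\mathbb{C}$ and $\langle A_i:i\in I\rangle$ is an $M$-f.s. sequence with $M\cup\bigcup_{i\in I}A_i=N$. Then for every initial segment $I_0\subseteq I$ (with or without a maximum), $M\cup\bigcup_{i\in I_0}A_i$ is an elementary substructure of $N$.
   Context: Work in a monster model $\mathbb{C}$ of an arbitrary complete theory. For $B\supseteq M$, $\mathrm{tp}(X/B)$ is finitely satisfied in $M$ if each of its formulas is satisfied by a tuple from $M$. An $M$-f.s. sequence is a sequence of sets $\langle A_i:i\in I\rangle$ with $\mathrm{tp}(A_i/A_{<i}M)$ finitely satisfied in $M$ for every $i$, where $A_{<i}=\bigcup_{j<i}A_j$. *)

From Stdlib Require Import List Vectors.Fin PeanoNat.
Set Implicit Arguments.

Record signature := Signature {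
  fsym : Type; far : fsym -> nat;
  rsym : Type; rar : rsym -> nat }.

Section Syntax.
Variable L : signature.

Inductive term : Type :=
| Var : nat -> term
| App : forall f : fsym L, (Fin.t (far L f) -> term) -> term.

(* Formulas with named variables (nat); [Ex x phi] binds variable x. *)
Inductive formula : Type :=
| Fal : formula
| Eq : term -> term -> formula
| Rel : forall r : rsym L, (Fin.t (rar L r) -> term) -> formula
| Neg : formula -> formula
| And : formula -> formula -> formula
| Ex : nat -> formula -> formula.
End Syntax.

(* An L-structure (the ambient model, playing the role of the monster model). *)
Record structure (L : signature) := Structure {
  dom :> Type;
  fint : forall f : fsym L, (Fin.t (far L f) -> dom) -> dom;
  rint : forall r : rsym L, (Fin.t (rar L r) -> dom) -> Prop }.

Section Semantics.
Variables (L : signature) (C : structure L).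

Definition upd (e : nat -> C) (x : nat) (a : C) : nat -> C :=
  fun y => if Nat.eqb y x then a else e y.

Fixpoint eval (e : nat -> C) (t : term L) : C :=
  match t with
  | Var _ n => e n
  | App f ts => fint C f (fun i => eval e (ts i))
  end.

(* Satisfaction in the substructure with universe S (a subset of C);
   quantifiers range over S, symbols are interpreted as in C. *)
Fixpoint sat_in (S : C -> Prop) (e : nat -> C) (phi : formula L) : Prop :=
  match phi with
  | Fal _ => False
  | Eq t1 t2 => eval e t1 = eval e t2
  | Rel r ts => rint C r (fun i => eval e (ts i))
  | Neg psi => ~ sat_in S e psi
  | And p q => sat_in S e p /\ sat_in S e q
  | Ex x psi => exists a, S a /\ sat_in S (upd e x a) psi
  end.

Definition sat (e : nat -> C) (phi : formula L) : Prop :=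
  sat_in (fun _ => True) e phi.

Definition substructure (S : C -> Prop) : Prop :=
  (exists a, S a) /\
  forall f (args : Fin.t (far L f) -> C), (forall i, S (args i)) -> S (fint C f args).

Definition elem_sub (S T : C -> Prop) : Prop :=
  substructure S /\ substructure T /\ (forall a, S a -> T a) /\
  forall (phi : formula L) (e : nat -> C), (forall n, S (e n)) ->
    (sat_in S e phi <-> sat_in T e phi).

(* tp(X/B) is finitely satisfied in M: every formula phi(x_0..x_{n-1}, b)
   with x-variables 0..n-1 realized (in C) by a tuple from X and parameters
   (all other variables) from B, is realized in C by a tuple from M
   (with the same parameters). *)
Definition fs_in (M X B : C -> Prop) : Prop :=
  forall (phi : formula L) (n : nat) (e : nat -> C),
    (forall i, i < n -> X (e i)) -> (forall i, n <= i -> B (e i)) ->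
    sat e phi ->
    exists e', (forall i, i < n -> M (e' i)) /\ (forall i, n <= i -> e' i = e i) /\
               sat e' phi.

(* |S| < |C| : S is small (no injection of C into S). *)
Definition small (S : C -> Prop) : Prop :=
  ~ exists g : C -> {a : C | S a}, forall x y, g x = g y -> x = y.

(* C is |C|-saturated: every finitely satisfiable set of formulas in the
   variable 0 with parameters (values of the other variables) from a small set
   A is realized in C. *)
Definition saturated : Prop :=
  forall (A : C -> Prop) (p : formula L * (nat -> C) -> Prop), small A ->
    (forall q, p q -> forall i, 0 < i -> A (snd q i)) ->
    (forall l : list (formula L * (nat -> C)), (forall q, In q l -> p q) ->
       exists c, forall q, In q l -> sat (upd (snd q) 0 c) (fst q)) ->
    exists c, forall q, p q -> sat (upd (snd q) 0 c) (fst q).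

End Semantics.

(* Let S = M ∪ ⋃_{i ∈ I0} A_i.  We verify the Tarski–Vaught test for S ⊆ N,
   in the form: if e is an S-valuation and a ∈ N realizes phi(x, e), then so
   does some b ∈ S.  If a ∉ S then a ∈ A_j for some j ∉ I0; since I0 is an
   initial segment, every parameter from S lies in B_j = M ∪ ⋃_{j' < j} A_j',
   and tp(A_j / B_j) is finitely satisfied in M, so phi(x, e) is realized by
   some b ∈ M ⊆ S.  The same witness property, applied to the formula
   x = f(y_1, ..., y_n), shows that S is closed under the function symbols.

   Then it proves the
   Tarski–Vaught test and finally the theorem. *)
From Stdlib Require Import Vectors.Fin PeanoNat Arith Lia FunctionalExtensionality Classical.

Section Renaming.
Variables (L : signature) (C : structure L).

Fixpoint ren_t (s : nat -> nat) (t : term L) : term L :=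
  match t with
  | Var _ n => Var L (s n)
  | App f ts => App f (fun i => ren_t s (ts i))
  end.

Fixpoint ren (s : nat -> nat) (p : formula L) : formula L :=
  match p with
  | Fal _ => Fal L
  | Eq t1 t2 => Eq (ren_t s t1) (ren_t s t2)
  | Rel r ts => Rel r (fun i => ren_t s (ts i))
  | Neg q => Neg (ren s q)
  | And p q => And (ren s p) (ren s q)
  | Ex x q => Ex (s x) (ren s q)
  end.

Lemma eval_ren (s : nat -> nat) (e : nat -> C) (t : term L) :
  eval C e (ren_t s t) = eval C (fun k => e (s k)) t.
Proof.
  induction t as [n | f ts IH]; simpl; auto.
  f_equal; apply functional_extensionality; auto.
Qed.

Lemma upd_comp (s : nat -> nat) (Hs : forall a b, s a = s b -> a = b)
  (e : nat -> C) (x : nat) (a : C) :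
  (fun k => upd C e (s x) a (s k)) = upd C (fun k => e (s k)) x a.
Proof.
  apply functional_extensionality; intro k; unfold upd.
  destruct (Nat.eqb_spec k x), (Nat.eqb_spec (s k) (s x)); subst; auto;
    exfalso; auto.
Qed.

Lemma sat_ren (s : nat -> nat) (Hs : forall a b, s a = s b -> a = b)
  (S : C -> Prop) (p : formula L) :
  forall e, sat_in C S e (ren s p) <-> sat_in C S (fun k => e (s k)) p.
Proof.
  induction p as [| t1 t2 | r ts | q IH | p IHp q IHq | x q IH]; intro e; simpl.
  - tauto.
  - rewrite !eval_ren; tauto.
  - replace (fun i => eval C e (ren_t s (ts i)))
      with (fun i => eval C (fun k => e (s k)) (ts i)); [tauto|].
    apply functional_extensionality; intro; symmetry; apply eval_ren.
  - rewrite IH; tauto.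
  - rewrite IHp, IHq; tauto.
  - split; intros [a [Ha Hq]]; exists a; split; auto.
    + apply IH in Hq; rewrite upd_comp in Hq; auto.
    + apply IH; rewrite upd_comp; auto.
Qed.
End Renaming.

Arguments ren_t {L} s t.
Arguments ren {L} s p.

Definition swp (x k : nat) : nat :=
  if Nat.eqb k 0 then x else if Nat.eqb k x then 0 else k.

Lemma swp_0 (x : nat) : swp x 0 = x.
Proof. reflexivity. Qed.

Lemma swp_self (x : nat) : swp x x = 0.
Proof. unfold swp; destruct (Nat.eqb_spec x 0); [subst | rewrite Nat.eqb_refl]; auto. Qed.

Lemma swp_inv (x k : nat) : swp x (swp x k) = k.
Proof.
  unfold swp.
  destruct (Nat.eqb_spec k 0) as [->|Hk0]; [rewrite Nat.eqb_refl; destruct (Nat.eqb_spec x 0); auto|].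
  destruct (Nat.eqb_spec k x) as [->|Hkx]; [reflexivity|].
  destruct (Nat.eqb_spec k 0), (Nat.eqb_spec k x); tauto.
Qed.

Lemma swp_inj (x a b : nat) : swp x a = swp x b -> a = b.
Proof. intro H; rewrite <- (swp_inv x a), <- (swp_inv x b), H; auto. Qed.

Section FiniteSatisfiability.
Variables (L : signature) (C : structure L).

(* Obtained by swapping x with 0. *)
Lemma fs_realize_var (M X B : C -> Prop) (Hfs : fs_in C M X B)
  (phi : formula L) (e : nat -> C) (x : nat) :
  X (e x) -> (forall k, k <> x -> B (e k)) -> sat C e phi ->
  exists m, M m /\ sat C (upd C e x m) phi.
Proof.
  intros HX HB Hphi.
  set (e1 := fun k => e (swp x k)).
  assert (He1 : sat C e1 (ren (swp x) phi)).
  { unfold sat; apply (sat_ren L C (swp x) (swp_inj x)); unfold e1.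
    replace (fun k => e (swp x (swp x k))) with e; [exact Hphi|].
    apply functional_extensionality; intro; rewrite swp_inv; auto. }
  destruct (Hfs (ren (swp x) phi) 1 e1) as [e2 [HM [Hsame Hsat]]].
  - intros i Hi; replace i with 0 by lia; exact HX.
  - intros i Hi; apply HB; intro E.
    assert (i = 0) by (apply (swp_inj x); rewrite E, swp_0; auto); lia.
  - exact He1.
  - exists (e2 0); split; [apply HM; lia|].
    apply (sat_ren L C (swp x) (swp_inj x)) in Hsat.
    replace (upd C e x (e2 0)) with (fun k => e2 (swp x k)); [exact Hsat|].
    apply functional_extensionality; intro k; unfold upd.
    destruct (Nat.eqb_spec k x) as [->|Hk]; [rewrite swp_self; auto|].
    assert (swp x k <> 0) by (intro E; apply Hk, (swp_inj x); rewrite E, swp_self; auto).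
    rewrite Hsame by lia; unfold e1; rewrite swp_inv; auto.
Qed.
End FiniteSatisfiability.

Arguments fs_realize_var {L C M X B} Hfs phi e x.

Section TarskiVaught.
Variables (L : signature) (C : structure L).

Lemma upd_in (P : C -> Prop) (e : nat -> C) (x : nat) (a : C) :
  (forall k, P (e k)) -> P a -> forall k, P (upd C e x a k).
Proof. intros He Ha k; unfold upd; destruct (Nat.eqb k x); auto. Qed.

Lemma tarski_vaught (S T : C -> Prop) :
  substructure C S -> substructure C T -> (forall a, S a -> T a) ->
  (forall phi e x a, (forall k, S (e k)) -> T a -> sat_in C T (upd C e x a) phi ->
     exists b, S b /\ sat_in C T (upd C e x b) phi) ->
  elem_sub C S T.
Proof.
  intros HS HT HST HTV; split; [|split; [|split]]; auto.
  intro phi; induction phi as [| | | q IH | p IHp q IHq | x q IH];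
    intros e He; simpl; try tauto.
  - rewrite IH; tauto.
  - rewrite IHp, IHq; tauto.
  - split.
    + intros [a [Ha Hq]]; exists a; split; auto.
      apply IH; auto; apply upd_in; auto.
    + intros [a [Ha Hq]].
      destruct (HTV q e x a He Ha Hq) as [b [Hb Hqb]].
      exists b; split; auto; apply IH; auto; apply upd_in; auto.
Qed.

Definition fin_val (d : C) (n : nat) (args : Fin.t n -> C) (k : nat) : C :=
  match lt_dec k n with
  | left h => args (Fin.of_nat_lt h)
  | right _ => d
  end.
Arguments fin_val d {n} args k.

Lemma fin_val_spec (d : C) (n : nat) (args : Fin.t n -> C) (k : Fin.t n) :
  fin_val d args (proj1_sig (Fin.to_nat k)) = args k.
Proof.
  unfold fin_val; destruct (lt_dec _ _) as [h|h].
  - f_equal; destruct (Fin.to_nat k) as [kk pk] eqn:E; simpl in *.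
    rewrite <- (Fin.of_nat_to_nat_inv k), E; apply Fin.of_nat_ext.
  - exfalso; apply h, (proj2_sig (Fin.to_nat k)).
Qed.

Definition graph_formula (f : fsym L) : formula L :=
  Eq (Var L 0) (App f (fun k => Var L (S (proj1_sig (Fin.to_nat k))))).

Lemma sat_graph_formula (f : fsym L) (d b : C) (args : Fin.t (far L f) -> C) :
  sat C (upd C (fun k => match k with 0 => d | S k => fin_val d args k end) 0 b)
      (graph_formula f)
  <-> b = fint C f args.
Proof.
  unfold sat, graph_formula; simpl.
  replace (fun i => upd C _ 0 b (S (proj1_sig (Fin.to_nat i)))) with args; [tauto|].
  apply functional_extensionality; intro k; symmetry; apply fin_val_spec.
Qed.

Lemma witness_substructure (S T : C -> Prop) :
  (exists d, S d) -> substructure C T -> (forall a, S a -> T a) ->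
  (forall phi e x a, (forall k, S (e k)) -> T a -> sat C (upd C e x a) phi ->
     exists b, S b /\ sat C (upd C e x b) phi) ->
  substructure C S.
Proof.
  intros [d Hd] HT HST HW; split; [exists d; auto|].
  intros f args Hargs.
  set (e := fun k => match k with 0 => d | S k => fin_val d args k end).
  assert (He : forall k, S (e k)).
  { intros [|k]; simpl; auto; unfold fin_val; destruct (lt_dec _ _); auto. }
  destruct (HW (graph_formula f) e 0 (fint C f args)) as [b [Hb Hgraph]]; auto.
  - apply (proj2 HT); auto.
  - apply sat_graph_formula; auto.
  - apply sat_graph_formula in Hgraph; subst; auto.
Qed.
End TarskiVaught.

Section InitialSegment.
Variables (L : signature) (C : structure L) (M N : C -> Prop).
Hypothesis HN : elem_sub C N (fun _ => True).
Hypothesis HMN : elem_sub C M N.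
Variables (I : Type) (lt : I -> I -> Prop).
Hypothesis lt_total : forall i j, lt i j \/ i = j \/ lt j i.
Variable A : I -> C -> Prop.
Hypothesis Hfs : forall i, fs_in C M (A i) (fun x => M x \/ exists j, lt j i /\ A j x).
Hypothesis Hcover : forall x, N x <-> (M x \/ exists i, A i x).
Variable I0 : I -> Prop.
Hypothesis HI0 : forall i j, lt j i -> I0 i -> I0 j.

Definition initial_part (x : C) : Prop := M x \/ exists i, I0 i /\ A i x.

Lemma initial_part_in_N (x : C) : initial_part x -> N x.
Proof. intros [Hx | [i [_ Hx]]]; apply Hcover; eauto. Qed.

Lemma initial_part_below (j : I) (x : C) :
  ~ I0 j -> initial_part x -> M x \/ exists j', lt j' j /\ A j' x.
Proof.
  intros Hj [Hx | [i [Hi Hx]]]; auto; right; exists i; split; auto.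
  destruct (lt_total i j) as [H | [-> | H]]; auto; exfalso; eauto.
Qed.

Lemma N_split (a : C) : N a -> initial_part a \/ exists j, ~ I0 j /\ A j a.
Proof.
  intro Ha; apply Hcover in Ha; destruct Ha as [Ha | [j Hj]].
  - left; left; auto.
  - destruct (classic (I0 j)); [left; right | right]; eauto.
Qed.

Lemma initial_part_witness (phi : formula L) (e : nat -> C) (x : nat) (a : C) :
  (forall k, initial_part (e k)) -> N a -> sat C (upd C e x a) phi ->
  exists b, initial_part b /\ sat C (upd C e x b) phi.
Proof.
  intros He Ha Hphi.
  destruct (N_split a Ha) as [HaS | [j [Hj Haj]]]; [eauto|].
  destruct (fs_realize_var (Hfs j) phi (upd C e x a) x) as [m [Hm Hsat]]; auto.
  - unfold upd; rewrite Nat.eqb_refl; auto.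
  - intros k Hk; unfold upd; apply Nat.eqb_neq in Hk; rewrite Hk.
    apply initial_part_below; auto.
  - exists m; split; [left; auto|].
    replace (upd C e x m) with (upd C (upd C e x a) x m); auto.
    apply functional_extensionality; intro k; unfold upd; destruct (Nat.eqb k x); auto.
Qed.

Lemma sat_in_N (phi : formula L) (e : nat -> C) :
  (forall k, N (e k)) -> sat_in C N e phi <-> sat C e phi.
Proof. intro He; destruct HN as [_ [_ [_ Hel]]]; apply Hel; auto. Qed.

Lemma initial_part_elementary : elem_sub C initial_part N.
Proof.
  destruct HMN as [[[m0 Hm0] _] [HNsub _]].
  assert (HSN : forall a, initial_part a -> N a) by exact initial_part_in_N.
  assert (HvalN : forall e x a, (forall k, initial_part (e k)) -> N a ->
                    forall k, N (upd C e x a k)) by (intros; apply upd_in; auto).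
  apply tarski_vaught; auto.
  - apply witness_substructure with (T := N); auto.
    + exists m0; left; auto.
    + intros phi e x a He Ha Hphi; exact (initial_part_witness phi e x a He Ha Hphi).
  - intros phi e x a He Ha Hphi.
    apply sat_in_N in Hphi; auto.
    destruct (initial_part_witness phi e x a He Ha Hphi) as [b [Hb Hbphi]].
    exists b; split; auto; apply sat_in_N; auto.
Qed.
End InitialSegment.

Theorem lemma2 (L : signature) (C : structure L) (HC : saturated C)
  (M N : C -> Prop)
  (HN : elem_sub C N (fun _ => True)) (HNsmall : small C N)
  (HMN : elem_sub C M N)
  (I : Type) (lt : I -> I -> Prop)
  (lt_irrefl : forall i, ~ lt i i)
  (lt_trans : forall i j k, lt i j -> lt j k -> lt i k)
  (lt_total : forall i j, lt i j \/ i = j \/ lt j i)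
  (A : I -> C -> Prop)
  (Hfs : forall i, fs_in C M (A i) (fun x => M x \/ exists j, lt j i /\ A j x))
  (Hcover : forall x, N x <-> (M x \/ exists i, A i x))
  (I0 : I -> Prop) (HI0 : forall i j, lt j i -> I0 i -> I0 j) :
  elem_sub C (fun x => M x \/ exists i, I0 i /\ A i x) N.
Proof.
  exact (initial_part_elementary L C M N HN HMN I lt lt_total A Hfs Hcover I0 HI0).
Qed.
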